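(* Let $\varepsilon>0$ and $K=\lceil 3mn/\varepsilon\rceil$. Let items $g_{ji}\in M$ (ordered pairs $j\ne i$) be given and let $\mathcal{A}=(A_1,\dots,A_n)$ be an allocation of $M$ with $g_{ji}\in A_j$ for all $j\ne i$. If the allocation $\mathcal{A}'=(A_1\cup\{d_1\},\dots,A_n\cup\{d_n\})$ is envy-free with respect to the rounded valuations $\overline v_1,\dots,\overline v_n$ (i.e. $\overline v_i(A_i\cup\{d_i\})\ge\overline v_i(A_j\cup\{d_j\})$ for all $i\ne j$), then for all $i\ne j$, $v_i(A_i)\ge(1-\varepsilon)\,v_i(A_j\setminus\{g_{ji}\})$; in particular $\mathcal{A}$ is $(1-\varepsilon)$-approximate EF1 with respect to $v_1,\dots,v_n$.
   Context: Agents $[n]$, items $M=[m]$, additive valuations $v_i$. For $\alpha\in(0,1]$, an allocation is $\alpha$-approximate EF1 if for all $i\ne j$ with $A_j\ne\emptyset$ there exists $g\in A_j$ with $v_i(A_i)\ge\alpha\,v_i(A_j\setminus\{g\})$. Rounded instance: given integer $K\ge1$ and items $g_{ji}\in M$ for ordered pairs $j\ne i$, let $Y_i=\{g_{ji}: j\ne i\}$, $V_i=v_i(M\setminus Y_i)$, $\tau_i=V_i/K$. Define additive $\overline v_i$ on $M\cup\{d_1,\dots,d_n\}$ ($d_1,\dots,d_n$ new dummy items): for $o\in M\setminus Y_i$, $\overline v_i(o)=\max\{k\tau_i:k\in\mathbb{Z}_{\ge0},\,k\tau_i\le v_i(o)\}$ (and $\overline v_i(o)=0$ if $\tau_i=0$);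 $\overline v_i(o)=0$ for $o\in Y_i$; $\overline v_i(d_i)=m\tau_i$ and $\overline v_i(d_j)=0$ for $j\ne i$. *)

From mathcomp Require Import all_boot all_order all_algebra.
Set Implicit Arguments. Unset Strict Implicit. Unset Printing Implicit Defensive.
Import Order.TTheory GRing.Theory Num.Theory.
Local Open Scope ring_scope.

Section Fair.
Variables (R : archiRealFieldType) (n m : nat).

Definition bval (v : 'I_n -> 'I_m -> R) (i : 'I_n) (S : {set 'I_m}) : R :=
  \sum_(o in S) v i o.

Definition is_allocation (A : 'I_n -> {set 'I_m}) : Prop :=
  (forall i j, i != j -> [disjoint A i & A j]) /\
  (\bigcup_(i < n) A i = [set: 'I_m]).

Definition approx_EF1 (v : 'I_n -> 'I_m -> R) (alpha : R)
    (A : 'I_n -> {set 'I_m}) : Prop :=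
  forall i j, i != j -> A j != set0 ->
    exists2 g, g \in A j & bval v i (A i) >= alpha * bval v i (A j :\ g).

Definition Yset (g : 'I_n -> 'I_n -> 'I_m) (i : 'I_n) : {set 'I_m} :=
  [set g j i | j in [set j | j != i]].

Definition Vval v g i : R := bval v i (~: Yset g i).

Definition tau v g (K : nat) i : R := Vval v g i / K%:R.

(* items of the rounded instance: inl o for o in M, inr j for dummy d_j *)
Definition ext_item := ('I_m + 'I_n)%type.

(* rounded valuation; for tau > 0 and v >= 0,
   max{k tau : k in Z>=0, k tau <= v} = floor(v / tau) * tau *)
Definition vbar v g (K : nat) (i : 'I_n) (x : ext_item) : R :=
  match x with
  | inl o =>
      if o \in Yset g i then 0
      else if tau v g K i == 0 then 0
      else (Num.floor (v i o / tau v g K i))%:~R * tau v g K i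
  | inr j => if j == i then m%:R * tau v g K i else 0
  end.

Definition val_ext v g K i (S : {set ext_item}) : R :=
  \sum_(x in S) vbar v g K i x.

Definition ext_bundle (A : 'I_n -> {set 'I_m}) (j : 'I_n) : {set ext_item} :=
  inr j |: [set inl o | o in A j].

Definition Kof (eps : R) : nat := `|Num.ceil (3 * m%:R * n%:R / eps)|%N.

End Fair.

(** For [o] outside [Y_i] the rounding loses less than [tau_i], so agent [i]
    loses at most [m tau_i] on any bundle avoiding [Y_i]; the dummy item [d_i]
    is worth exactly this much to [i].  Envy-freeness in the rounded instance
    then gives [v_i(A_j \ g_ji) <= vbar_i(A_i) + 2 m tau_i].  Summing the
    envy-freeness inequalities over all bundles bounds [V_i = K tau_i] by
    [n (m tau_i + vbar_i(A_i))], and the choice of [K] turns this into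
    [3 m tau_i <= eps (m tau_i + vbar_i(A_i))], which absorbs the additive
    error [2 m tau_i] into the factor [1 - eps]. *)

From mathcomp Require Import all_boot all_order all_algebra.
From mathcomp Require Import lra.
Set Implicit Arguments. Unset Strict Implicit. Unset Printing Implicit Defensive.
Import Order.TTheory GRing.Theory Num.Theory.
Local Open Scope ring_scope.

Lemma absorb_additive_error (R : realFieldType) (eps a s t x : R) :
  0 < eps -> 0 <= t -> 0 <= s -> 0 <= x -> s <= a ->
  x <= s + 2 * t -> 3 * t <= eps * (t + s) -> (1 - eps) * x <= a.
Proof.
move=> eps_gt0 t_ge0 s_ge0 x_ge0 le_sa le_x le_3t.
have [eps_le1|eps_gt1] := lerP eps 1; last first.
  by rewrite (le_trans _ (le_trans s_ge0 le_sa)) // mulr_le0_ge0 // subr_le0 ltW.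
nra.
Qed.

Lemma Kof_ge (R : archiRealFieldType) (n m : nat) (eps : R) :
  0 < eps -> 3 * n%:R * m%:R / eps <= (Kof m n eps)%:R.
Proof.
move=> eps_gt0; have x_ge0 : 0 <= 3 * n%:R * m%:R / eps :> R.
  by rewrite divr_ge0 ?mulr_ge0 ?ler0n ?ltW.
by rewrite /Kof natr_absz ger0_norm ?ceil_ge // ceil_ge0 (lt_le_trans _ x_ge0) ?ltrN10.
Qed.

Lemma setD1_disjoint_Yset (n m : nat) (g : 'I_n -> 'I_n -> 'I_m)
    (A : 'I_n -> {set 'I_m}) i j :
  (forall k l, k != l -> [disjoint A k & A l]) ->
  (forall k l, k != l -> g k l \in A k) ->
  [disjoint A j :\ g j i & Yset g i].
Proof.
move=> disjA gA; apply/pred0P => o /=; rewrite !inE.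
apply/negP => /andP[/andP[og oA] /imsetP[k]]; rewrite inE => ki oE.
have [kj|kj] := eqVneq k j; first by rewrite oE kj eqxx in og.
by have /pred0P/(_ o) := disjA _ _ kj; rewrite /= oE gA // -oE oA.
Qed.

Section RoundedValuation.
Variables (R : archiRealFieldType) (n m : nat).
Variables (v : 'I_n -> 'I_m -> R) (g : 'I_n -> 'I_n -> 'I_m) (K : nat).
Hypothesis v_ge0 : forall i o, 0 <= v i o.
Hypothesis K_gt0 : (0 < K)%N.

Lemma tau_ge0 i : 0 <= tau v g K i.
Proof. by rewrite /tau /Vval /bval divr_ge0 ?ler0n ?sumr_ge0. Qed.

Lemma Vval_tau i : Vval v g i = tau v g K i * K%:R.
Proof. by rewrite /tau divfK // pnatr_eq0 -lt0n. Qed.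

Lemma tau_gt0 i : tau v g K i != 0 -> 0 < tau v g K i.
Proof. by rewrite lt_def tau_ge0 andbT. Qed.

Lemma vbar_le i o : vbar v g K i (inl o) <= v i o.
Proof.
rewrite /vbar; case: ifP => _; first exact: v_ge0.
case: ifP => [_|/negbT/tau_gt0 t_gt0]; first exact: v_ge0.
by rewrite -ler_pdivlMr // floor_le.
Qed.

Lemma vbar_ge0 i o : 0 <= vbar v g K i (inl o).
Proof.
rewrite /vbar; case: ifP => _ //; case: ifP => [//|/negbT/tau_gt0 t_gt0].
by rewrite mulr_ge0 ?(ltW t_gt0) // ler0z floor_ge0 divr_ge0 ?(ltW t_gt0).
Qed.

Lemma vbar_ge i o : o \notin Yset g i -> v i o - tau v g K i <= vbar v g K i (inl o).
Proof.
move=> oY; rewrite /vbar (negbTE oY); case: ifP => [/eqP t0|/negbT/tau_gt0 t_gt0].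
  have : v i o <= Vval v g i by rewrite /Vval /bval (bigD1 o) ?inE //= lerDl sumr_ge0.
  by rewrite Vval_tau t0 mul0r subr0.
have := floorD1_gt (v i o / tau v g K i).
by rewrite intrD -ltrBlDr -(ltr_pM2r t_gt0) mulrBl divfK ?gt_eqF // mul1r => /ltW.
Qed.

Lemma sum_vbar_subset i {S T : {set 'I_m}} : S \subset T ->
  \sum_(o in S) vbar v g K i (inl o) <= \sum_(o in T) vbar v g K i (inl o).
Proof.
move=> sST; rewrite [X in _ <= X](big_setID S) /= (setIidPr sST) lerDl.
by apply: sumr_ge0 => o _; apply: vbar_ge0.
Qed.

Lemma bval_le_sum_vbar i (S : {set 'I_m}) : [disjoint S & Yset g i] ->
  bval v i S - m%:R * tau v g K i <= \sum_(o in S) vbar v g K i (inl o).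
Proof.
move=> dSY; apply: le_trans (_ : \sum_(o in S) (v i o - tau v g K i) <= _).
  rewrite sumrB lerD2l lerN2 sumr_const -[_ *+ #|S|]mulr_natl.
  apply: ler_wpM2r; first exact: tau_ge0.
  by rewrite ler_nat (leq_trans (max_card _)) // card_ord.
apply: ler_sum => o oS; apply: vbar_ge.
by move: dSY; rewrite disjoint_sym => /pred0P/(_ o); rewrite /= oS andbT => ->.
Qed.

Lemma val_ext_bundle (A : 'I_n -> {set 'I_m}) i j :
  val_ext v g K i (ext_bundle A j) =
  (if j == i then m%:R * tau v g K i else 0) + \sum_(o in A j) vbar v g K i (inl o).
Proof.
rewrite /val_ext /ext_bundle big_setU1 /=; last by apply/imsetP => -[].
by rewrite big_imset //= => x y _ _ [].
Qed.

Lemma Vval_le_sum_val_ext (A : 'I_n -> {set 'I_m}) i : is_allocation A ->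
  Vval v g i <= \sum_j val_ext v g K i (ext_bundle A j).
Proof.
move=> [disjA covA].
under eq_bigr => j _ do rewrite val_ext_bundle.
rewrite big_split -big_mkcond big_pred1_eq -lerBlDl.
rewrite -partition_disjoint_bigcup // covA.
apply: le_trans (sum_vbar_subset i (subsetT (~: Yset g i))).
by apply: bval_le_sum_vbar; rewrite disjoints_subset.
Qed.

Lemma rounding_loss_le (eps : R) i : 0 < eps -> 3 * n%:R * m%:R / eps <= K%:R ->
  3 * n%:R * (m%:R * tau v g K i) <= eps * Vval v g i.
Proof.
move=> eps_gt0 K_ge; have K_ge' : 3 * n%:R * m%:R <= eps * K%:R.
  by rewrite [eps * _]mulrC -ler_pdivrMr.
have -> : eps * Vval v g i = eps * K%:R * tau v g K i by rewrite Vval_tau mulrA mulrAC.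
by rewrite mulrA ler_wpM2r ?tau_ge0.
Qed.

Section EnvyFree.
Variables (A : 'I_n -> {set 'I_m}) (i : 'I_n).
Hypothesis allocA : is_allocation A.
Hypothesis gA : forall j l, j != l -> g j l \in A j.
Hypothesis EF : forall j, j != i ->
  val_ext v g K i (ext_bundle A j) <= val_ext v g K i (ext_bundle A i).

Local Notation t := (m%:R * tau v g K i).
Local Notation s := (\sum_(o in A i) vbar v g K i (inl o)).

Lemma val_ext_own : val_ext v g K i (ext_bundle A i) = t + s.
Proof. by rewrite val_ext_bundle eqxx. Qed.

Lemma bval_setD1_le j : j != i -> bval v i (A j :\ g j i) <= s + 2 * t.
Proof.
move=> ji; have := bval_le_sum_vbar (setD1_disjoint_Yset i j allocA.1 gA).
have := sum_vbar_subset i (subD1set (A j) (g j i)).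
by have := EF ji; rewrite val_ext_own val_ext_bundle (negbTE ji) add0r; lra.
Qed.

Lemma Vval_le_envy_free : Vval v g i <= n%:R * (t + s).
Proof.
apply: le_trans (Vval_le_sum_val_ext i allocA) _.
apply: le_trans (_ : _ <= \sum_(j < n) val_ext v g K i (ext_bundle A i)) _.
  by apply: ler_sum => j _; have [->|ji] := eqVneq j i; last exact: EF.
by rewrite sumr_const card_ord val_ext_own -[_ *+ n]mulr_natl.
Qed.

Lemma approx_EF1_pair (eps : R) j : 0 < eps -> 3 * n%:R * m%:R / eps <= K%:R ->
  j != i -> (1 - eps) * bval v i (A j :\ g j i) <= bval v i (A i).
Proof.
move=> eps_gt0 K_ge ji.
have n_gt0 : 0 < n%:R :> R by rewrite ltr0n (leq_ltn_trans _ (ltn_ord i)).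
have rounding : 3 * t <= eps * (t + s).
  rewrite -(ler_pM2l n_gt0) mulrCA mulrA.
  apply: le_trans (rounding_loss_le i eps_gt0 K_ge) _.
  by rewrite mulrCA ler_wpM2l ?(ltW eps_gt0) ?Vval_le_envy_free.
apply: absorb_additive_error rounding => //.
- by rewrite mulr_ge0 ?ler0n ?tau_ge0.
- by apply: sumr_ge0 => o _; apply: vbar_ge0.
- by apply: sumr_ge0 => o _; apply: v_ge0.
- by apply: ler_sum => o _; apply: vbar_le.
- exact: bval_setD1_le.
Qed.

End EnvyFree.

End RoundedValuation.

Theorem lemma4 (R : archiRealFieldType) (n m : nat)
    (v : 'I_n -> 'I_m -> R) (eps : R)
    (g : 'I_n -> 'I_n -> 'I_m) (A : 'I_n -> {set 'I_m}) :
  (forall i o, 0 <= v i o) ->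
  0 < eps ->
  is_allocation A ->
  (forall j i, j != i -> g j i \in A j) ->
  (forall i j, i != j ->
     val_ext v g (Kof m n eps) i (ext_bundle A i)
       >= val_ext v g (Kof m n eps) i (ext_bundle A j)) ->
  (forall i j, i != j -> bval v i (A i) >= (1 - eps) * bval v i (A j :\ g j i))
  /\ approx_EF1 v (1 - eps) A.
Proof.
move=> v_ge0 eps_gt0 allocA gA EF.
have K_ge : 3 * n%:R * m%:R / eps <= (Kof m n eps)%:R by exact: Kof_ge.
have main i j : i != j -> (1 - eps) * bval v i (A j :\ g j i) <= bval v i (A i).
  move=> ij; have m_gt0 : 0 < m%:R :> R by rewrite ltr0n (leq_ltn_trans _ (ltn_ord (g i i))).
  have n_gt0 : 0 < n%:R :> R by rewrite ltr0n (leq_ltn_trans _ (ltn_ord i)).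
  have K_gt0 : (0 < Kof m n eps)%N.
    by rewrite -(ltr0n R) (lt_le_trans _ K_ge) // divr_gt0 // !mulr_gt0.
  apply: (approx_EF1_pair v_ge0 K_gt0 allocA gA) => //; last by rewrite eq_sym.
  by move=> l li; apply: EF; rewrite eq_sym.
split=> // i j ij _.
by exists (g j i); [apply: gA; rewrite eq_sym | apply: main].
Qed.
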